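(* Let $\langle\mathcal{D},\sigma,\varphi\rangle$ be a hybrid temporal achievement causal setting. Then $$\mathcal{D}\models\mathit{CausesDir}^{\mathit{prim}}_{\mathit{temp}}(a,ts,\varphi,\sigma)\land\sigma\le s^*\land\big(\forall s',t'.\;\sigma\le s'\le s^*\land\mathit{start}(s')\le t'\le\mathit{end}(s',s^* )\supset\varphi[t',s']\big)\supset\mathit{CausesDir}^{\mathit{prim}}_{\mathit{temp}}(a,ts,\varphi,s^* )$$ (free variables $a,ts,s^*$ universally quantified).
   Context: Hybrid temporal situation calculus (HTSC): $S_0$ initial situation, $do(a,s)$ successor situation, $do([a_1,\dots,a_n],s)$ the nesting. $s\sqsubset s'$: $s'$ reachable from $s$ by one or more actions; $s\sqsubseteq s'$: $s\sqsubset s'\lor s=s'$. $\mathit{time}(a(\vec x,t))=t$, $\mathit{start}(do(a,s))=\mathit{time}(a)$. $\mathit{Exec}(s)\doteq\forall a,s'.(do(a,s')\sqsubseteq s\supset\mathit{Poss}(a,s')\land\mathit{start}(s')\le\mathit{time}(a))$; $s<s'$ abbreviates $s\sqsubset s'\land\mathit{Exec}(s')$; $s\le s'$ abbreviates $s<s'\lor s=s'$. $\mathit{timeStamp}(S_0)=0$, $\mathit{timeStamp}(do(a,s))=\mathit{timeStamp}(s)+1$. A hybrid basic action theory $\mathcal{D}$ contains initial-state, precondition, successor-state (discrete fluents), state evolution (temporal fluents), unique-names and foundational axioms. A temporal fluent $f$ has state evolution axiom $f(\vec x,t,s)=y\equiv[\bigvee_i(\gamma^f_i(\vec x,s)\land\delta_i(\vec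 x,y,t,s))\lor(y=f(\vec x,\mathit{start}(s),s)\land\neg\bigvee_i\gamma^f_i(\vec x,s))]$ with mutually exclusive contexts $\gamma^f_i$ (formulas over discrete fluents). An effect $\varphi$ is a situation- and time-suppressed formula, uniform in the situation, constraining the value of one primitive temporal fluent $f$; $\varphi[t,s]$ restores time $t$ and situation $s$; $\psi[s]$ restores $s$ in a situation-suppressed $\psi$. $\mathit{CausesDir}(a,ts,\psi,s)\doteq\exists s_a.\,\mathit{timeStamp}(s_a)=ts\land(S_0<do(a,s_a)\le s)\land\neg\psi[s_a]\land\forall s'.(do(a,s_a)\le s'\le s\supset\psi[s'])$. $\mathit{end}(s',s)=\mathit{start}(s')$ if $s'=s$; $=\mathit{time}(a)$ if $do(a,s')\le s$. $\mathit{AchvSitAux}(s_\varphi,\varphi,s)\doteq\varphi[\mathit{end}(s_\varphi,s),s_\varphi]\land\forall s',t.(s_\varphi<s'\le s\land\mathit{start}(s')\le t\le\mathit{end}(s',s)\supset\varphi[t,s'])$; $\mathit{AchvSit}(s_\varphi,\varphi,s)\doteq\mathit{AchvSitAux}(s_\varphi,\varphi,s)\land\neg\exists s''.(s''<s_\varphi\land\mathit{AchvSitAux}(s'',\varphi,s))$. $\mathit{CausesDir}^{\mathit{prim}}_{\mathit{temp}}(a,ts,\varphi,s)\doteq\exists s_\varphi.\,\mathit{AchvSit}(s_\varphi,\varphi,s)\land\exists i.\,\mathit{CausesDir}(a,ts,\gamma^f_i,s_\varphi)$. Hybrid temporal achievement causal setting $\langle\mathcal{D},\sigma,\varphi\rangle$: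 $\sigma=do([\alpha_1,\dots,\alpha_n],S_0)$ ground, $n\ge1$, $\mathcal{D}\models\mathit{Exec}(\sigma)\land\neg\varphi[\mathit{start}(S_0),S_0]\land\neg\varphi[\mathit{time}(\alpha_1),S_0]\land\varphi[\mathit{start}(\sigma),\sigma]$. *)

From Stdlib Require Import Reals List.
Import ListNotations.
Open Scope R_scope.

(* By the foundational axioms of the situation calculus, the situations of any
   model form the tree of finite action sequences rooted at S0.  We therefore
   represent a situation as a list of actions, most recent action first:
   S0 = [], do(a,s) = a :: s. *)

Definition S0 {Act : Type} : list Act := [].
Definition do {Act : Type} (a : Act) (s : list Act) : list Act := a :: s.

Fixpoint do_seq {Act : Type} (l : list Act) (s : list Act) : list Act :=
  match l with
  | [] => s
  | a :: l' => do_seq l' (do a s)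
  end.

Inductive sqsub {Act : Type} : list Act -> list Act -> Prop :=
| sqsub_do : forall a s, sqsub s (do a s)
| sqsub_step : forall a s s', sqsub s s' -> sqsub s (do a s').

Definition sqsubeq {Act : Type} (s s' : list Act) : Prop := sqsub s s' \/ s = s'.

Definition start {Act : Type} (time : Act -> R) (start0 : R) (s : list Act) : R :=
  match s with
  | [] => start0
  | a :: _ => time a
  end.

Definition timeStamp {Act : Type} (s : list Act) : nat := length s.

Section HTSC.
Variable Act : Type.
Variable time : Act -> R.
Variable Poss : Act -> list Act -> Prop.
Variable start0 : R.

Local Notation start := (start time start0).

Definition Exec (s : list Act) : Prop :=
  forall a s', sqsubeq (do a s') s -> Poss a s' /\ start s' <= time a.

Definition slt (s s' : list Act) : Prop := sqsub s s' /\ Exec s'.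
Definition sle (s s' : list Act) : Prop := slt s s' \/ s = s'.

Definition CausesDir (a : Act) (ts : nat) (psi : list Act -> Prop) (s : list Act) : Prop :=
  exists sa, timeStamp sa = ts /\ slt S0 (do a sa) /\ sle (do a sa) s /\ ~ psi sa /\
    forall s', sle (do a sa) s' -> sle s' s -> psi s'.

(* End s' s e  :<->  end(s', s) = e  (end is a partial function, defined
   when s' = s or do(a,s') <= s; it is then single-valued) *)
Definition End (s' s : list Act) (e : R) : Prop :=
  (s' = s /\ e = start s') \/ (exists a, sle (do a s') s /\ e = time a).

(* phi : R -> situation -> Prop is phi[t,s] *)
Definition AchvSitAux (sphi : list Act) (phi : R -> list Act -> Prop) (s : list Act) : Prop :=
  (exists e, End sphi s e /\ phi e sphi) /\
  (forall s' t e, slt sphi s' -> sle s' s -> End s' s e ->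
      start s' <= t -> t <= e -> phi t s').

Definition AchvSit (sphi : list Act) (phi : R -> list Act -> Prop) (s : list Act) : Prop :=
  AchvSitAux sphi phi s /\ ~ (exists s'', slt s'' sphi /\ AchvSitAux s'' phi s).

(* CausesDir^prim_temp(a, ts, phi, s); gamma i are the contexts gamma^f_i of
   the state evolution axiom of the temporal fluent f constrained by phi. *)
Definition CausesDirPrimTemp (I : Type) (gamma : I -> list Act -> Prop)
  (a : Act) (ts : nat) (phi : R -> list Act -> Prop) (s : list Act) : Prop :=
  exists sphi, AchvSit sphi phi s /\ exists i, CausesDir a ts (gamma i) sphi.

End HTSC.

Definition effect {Act V : Type} (Phi : V -> Prop) (f : R -> list Act -> V)
  : R -> list Act -> Prop := fun t s => Phi (f t s).

Arguments Exec {Act}.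
Arguments slt {Act}.
Arguments sle {Act}.
Arguments CausesDir {Act}.
Arguments End {Act}.
Arguments AchvSitAux {Act}.
Arguments AchvSit {Act}.
Arguments CausesDirPrimTemp {Act} time Poss start0 {I}.

From Stdlib Require Import Reals List Lra Lia.
Import ListNotations.
Open Scope R_scope.
Set Implicit Arguments.

(* Keep the achievement situation s_phi and the context change that caused
   it.  Relative to s^*, phi still holds from s_phi onwards: up to sigma
   because s_phi achieved phi relative to sigma, and on [sigma, s^*] by
   assumption.  And s_phi stays the earliest such situation: an earlier
   achievement situation s'' relative to s^* is also one relative to sigma,
   because the only new obligation, phi at start(sigma) in sigma, is covered
   by the obligation of s'' on [start(sigma), end(sigma, s^* )].  Situations
   are lists, so the reachability order is the suffix order, and two
   situations below a common one are comparable by length. *)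

Definition suffix {A : Type} (s s' : list A) : Prop := exists l, s' = l ++ s.

Section Suffix.
Context {A : Type}.
Implicit Types s : list A.

Lemma suffix_refl s : suffix s s.
Proof. now exists []. Qed.

Lemma suffix_trans s1 s2 s3 : suffix s1 s2 -> suffix s2 s3 -> suffix s1 s3.
Proof. intros [l1 ->] [l2 ->]. exists (l2 ++ l1). now rewrite app_assoc. Qed.

Lemma suffix_length s s' : suffix s s' -> (length s <= length s')%nat.
Proof. intros [l ->]. rewrite length_app. lia. Qed.

Lemma suffix_total s1 s2 s :
  suffix s1 s -> suffix s2 s -> (length s1 <= length s2)%nat -> suffix s1 s2.
Proof.
  intros [l1 ->] [l2 E] Hlen.
  destruct (app_eq_app _ _ _ _ E) as [l [[_ ->] | [_ ->]]].
  - now exists l.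
  - rewrite length_app in Hlen.
    destruct l; [apply suffix_refl | simpl in Hlen; lia].
Qed.

Lemma sqsub_app s l a : sqsub s (l ++ a :: s).
Proof. induction l; [apply sqsub_do | now apply sqsub_step]. Qed.

Lemma sqsub_inv s s' : sqsub s s' -> exists a l, s' = l ++ a :: s.
Proof.
  induction 1 as [a s | b s s' _ [a [l ->]]].
  - now exists a, [].
  - now exists a, (b :: l).
Qed.

Lemma sqsub_length s s' : sqsub s s' -> (length s < length s')%nat.
Proof. intros [a [l ->]]%sqsub_inv. rewrite length_app. simpl. lia. Qed.

Lemma sqsub_suffix_trans s1 s2 s3 : sqsub s1 s2 -> suffix s2 s3 -> sqsub s1 s3.
Proof.
  intros [a [l ->]]%sqsub_inv [l' ->].
  rewrite app_assoc. apply sqsub_app.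
Qed.

Lemma sqsubeq_iff_suffix s s' : sqsubeq s s' <-> suffix s s'.
Proof.
  split.
  - intros [[a [l ->]]%sqsub_inv | ->]; [exists (l ++ [a]) | exists []];
      now rewrite <- ?app_assoc.
  - intros [l ->]. induction l as [|a l _] using rev_ind; [now right |].
    left. rewrite <- app_assoc. apply sqsub_app.
Qed.

End Suffix.

Section SituationOrder.
Variables (Act : Type) (time : Act -> R) (Poss : Act -> list Act -> Prop) (start0 : R).

Local Notation start := (start time start0).
Local Notation Exec := (Exec time Poss start0).
Local Notation slt := (slt time Poss start0).
Local Notation sle := (sle time Poss start0).
Local Notation End := (End time Poss start0).

Implicit Types s : list Act.

Lemma Exec_suffix s s' : Exec s' -> suffix s s' -> Exec s.
Proof.
  intros HX Hs a s0 H. apply HX, sqsubeq_iff_suffix.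
  exact (suffix_trans (proj1 (sqsubeq_iff_suffix _ _) H) Hs).
Qed.

Lemma sle_suffix s s' : sle s s' -> suffix s s'.
Proof.
  intros [[H _] | ->]; [|apply suffix_refl].
  now apply sqsubeq_iff_suffix; left.
Qed.

Lemma suffix_sle s s' : Exec s' -> suffix s s' -> sle s s'.
Proof.
  intros HX [H | ->]%sqsubeq_iff_suffix; [left | right]; easy.
Qed.

Lemma sle_trans s1 s2 s3 : sle s1 s2 -> sle s2 s3 -> sle s1 s3.
Proof.
  intros H12 [[H23 HX] | <-]; [|exact H12].
  apply suffix_sle; [exact HX |].
  apply (suffix_trans (sle_suffix H12)), sqsubeq_iff_suffix. now left.
Qed.

Lemma slt_do s s' : slt s s' -> exists b, sle (do b s) s'.
Proof.
  intros [[b [l ->]]%sqsub_inv HX]. exists b.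
  apply suffix_sle; [exact HX | now exists l].
Qed.

Lemma End_suffix s' s e : End s' s e -> suffix s' s.
Proof.
  intros [[-> _] | [b [Hb _]]]; [apply suffix_refl |].
  apply (suffix_trans (s2 := do b s')); [now exists [b] | exact (sle_suffix Hb)].
Qed.

Lemma End_exists_ge_start s s' :
  sle s s' -> exists e, End s s' e /\ start s <= e.
Proof.
  intros [Hlt | <-].
  - destruct (slt_do Hlt) as [b Hb]. exists (time b). split.
    + right. now exists b.
    + apply (proj2 Hlt), sqsubeq_iff_suffix, sle_suffix, Hb.
  - exists (start s). split; [left | right]; easy.
Qed.

Section BelowExecutable.
Variable top : list Act.
Hypothesis Htop : Exec top.

Lemma sle_of_suffixes s1 s2 :
  suffix s1 top -> suffix s2 top -> (length s1 <= length s2)%nat -> sle s1 s2.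
Proof.
  intros H1 H2 Hlen.
  exact (suffix_sle (Exec_suffix Htop H2) (suffix_total H1 H2 Hlen)).
Qed.

Lemma End_narrow s' s e :
  suffix s top -> (length s' < length s)%nat -> End s' top e -> End s' s e.
Proof.
  intros Hs Hlen [[-> _] | [b [Hb ->]]].
  - apply suffix_length in Hs. lia.
  - right. exists b. split; [|reflexivity].
    apply sle_of_suffixes; [exact (sle_suffix Hb) | exact Hs | simpl; lia].
Qed.

End BelowExecutable.

Variable phi : R -> list Act -> Prop.

Local Notation AchvSitAux := (AchvSitAux time Poss start0).
Local Notation AchvSit := (AchvSit time Poss start0).

Lemma AchvSitAux_extend sphi s sstar :
  AchvSitAux sphi phi s -> sle s sstar ->
  (forall s' t e, sle s s' -> sle s' sstar -> End s' sstar e ->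
     start s' <= t -> t <= e -> phi t s') ->
  AchvSitAux sphi phi sstar.
Proof.
  intros Haux [[Hsub Hstar] | <-] Hnew; [|exact Haux].
  destruct Haux as [[e [HE Hphi]] Hafter].
  assert (Hs : suffix s sstar) by (apply sqsubeq_iff_suffix; now left).
  split.
  - destruct HE as [[-> ->] | [b [Hb ->]]].
    + destruct (End_exists_ge_start (s := s) (s' := sstar)) as [e' [HE' He']];
        [now left |].
      exists e'. split; [exact HE' |].
      apply (Hnew _ _ e'); [now right | now left | exact HE' | exact He' | lra].
    + exists (time b). split; [|exact Hphi].
      right. exists b. split; [|reflexivity].
      apply (sle_trans Hb). now left.
  - intros s' t e' Hlt' Hle' HE' Ht1 Ht2.
    pose proof (sle_suffix Hle') as Hs'.
    destruct (Nat.le_gt_cases (length s) (length s')) as [Hlen | Hlen].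
    + apply (Hnew s' t e'); auto. exact (sle_of_suffixes Hstar Hs Hs' Hlen).
    + apply (Hafter s' t e'); auto.
      * apply (sle_of_suffixes Hstar Hs' Hs). lia.
      * exact (End_narrow Hstar Hs Hlen HE').
Qed.

Lemma AchvSitAux_restrict s'' s sstar :
  AchvSitAux s'' phi sstar -> sqsub s'' s -> sle s sstar -> AchvSitAux s'' phi s.
Proof.
  intros [[e [HE Hphi]] Hafter] Hsub Hle. split.
  - destruct Hle as [[Hss HX] | <-]; [|now exists e].
    exists e. split; [|exact Hphi].
    apply (End_narrow HX); [now apply sqsubeq_iff_suffix; left | |exact HE].
    exact (sqsub_length Hsub).
  - intros s' t e' Hlt' Hle' [[-> ->] | [b [Hb ->]]] Ht1 Ht2.
    + destruct (End_exists_ge_start Hle) as [e'' [HE'' He'']].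
      apply (Hafter s t e''); auto. lra.
    + apply (Hafter s' t (time b)); auto.
      * exact (sle_trans Hle' Hle).
      * right. exists b. split; [exact (sle_trans Hb Hle) | reflexivity].
Qed.

Lemma AchvSit_extend sphi s sstar :
  AchvSit sphi phi s -> sle s sstar ->
  (forall s' t e, sle s s' -> sle s' sstar -> End s' sstar e ->
     start s' <= t -> t <= e -> phi t s') ->
  AchvSit sphi phi sstar.
Proof.
  intros [Haux Hmin] Hle Hnew. split; [exact (AchvSitAux_extend Haux Hle Hnew) |].
  intros [s'' [Hlt Haux'']]. apply Hmin. exists s''.
  split; [exact Hlt |]. apply (AchvSitAux_restrict Haux''); [|exact Hle].
  destruct Haux as [[e [HE _]] _].
  exact (sqsub_suffix_trans (proj1 Hlt) (End_suffix HE)).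
Qed.

Lemma CausesDirPrimTemp_extend (I : Type) (gamma : I -> list Act -> Prop) a ts s sstar :
  CausesDirPrimTemp time Poss start0 gamma a ts phi s -> sle s sstar ->
  (forall s' t e, sle s s' -> sle s' sstar -> End s' sstar e ->
     start s' <= t -> t <= e -> phi t s') ->
  CausesDirPrimTemp time Poss start0 gamma a ts phi sstar.
Proof.
  intros [sphi [Hachv Hcause]] Hle Hnew.
  exists sphi. split; [exact (AchvSit_extend Hachv Hle Hnew) | exact Hcause].
Qed.

End SituationOrder.

Theorem theorem5p6
  (Act : Type) (time : Act -> R) (Poss : Act -> list Act -> Prop) (start0 : R)
  (V : Type) (I : Type)
  (gamma : I -> list Act -> Prop)
  (delta : I -> V -> R -> list Act -> Prop)
  (f : R -> list Act -> V) (Phi : V -> Prop)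
  (* contexts of the state evolution axiom are mutually exclusive *)
  (Hexcl : forall i j s, gamma i s -> gamma j s -> i = j)
  (* state evolution axiom of f *)
  (Hsea : forall t s y,
      f t s = y <->
      ((exists i, gamma i s /\ delta i y t s) \/
       (y = f (start time start0 s) s /\ ~ (exists i, gamma i s))))
  (* the causal setting: sigma = do([alpha1; ...; alphan], S0), n >= 1 *)
  (alpha1 : Act) (alphas : list Act)
  (Hexec : Exec time Poss start0 (do_seq (alpha1 :: alphas) S0))
  (Hnot0 : ~ effect Phi f (start time start0 S0) S0)
  (Hnot1 : ~ effect Phi f (time alpha1) S0)
  (Hach : effect Phi f (start time start0 (do_seq (alpha1 :: alphas) S0))
                       (do_seq (alpha1 :: alphas) S0)) :
  forall (a : Act) (ts : nat) (sstar : list Act),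
    CausesDirPrimTemp time Poss start0 gamma a ts (effect Phi f)
      (do_seq (alpha1 :: alphas) S0) ->
    sle time Poss start0 (do_seq (alpha1 :: alphas) S0) sstar ->
    (forall s' t' e,
        sle time Poss start0 (do_seq (alpha1 :: alphas) S0) s' ->
        sle time Poss start0 s' sstar ->
        End time Poss start0 s' sstar e ->
        start time start0 s' <= t' -> t' <= e ->
        effect Phi f t' s') ->
    CausesDirPrimTemp time Poss start0 gamma a ts (effect Phi f) sstar.
Proof.
  (* Persistence holds for every situation, not only for the setting's sigma. *)
  intros a ts sstar. apply CausesDirPrimTemp_extend.
Qed.
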